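(* Let $(P,e)$, $P\in\mathcal{T}_k$, be a friendly tree pattern, let $\sigma(P,e)=(\tau(P),C)$ be its associated mesh pattern, let $i$ be the position of the largest value $k$ in $\tau(P)$, and let $\sigma^-(P,e)=(\tau(P),C\setminus\{(i-1,k)\})$. Then the mesh pattern $\sigma^-(P,e)$ is tame.
   Context: Binary trees: $\mathcal{T}_k$ is the set of binary trees on $k$ vertices labeled $1,\dots,k$ by the search tree property (left-subtree vertices of $i$ smaller, right-subtree vertices larger). $c_L(i),c_R(i),p(i)$: left child, right child, parent ($\varepsilon$ if nonexistent); $r(P)$ the root; $P(i)$ the subtree rooted at $i$; $L(i),R(i)$ the subtrees rooted at $c_L(i),c_R(i)$. $B_R(i)=\{i,c_R(i),c_R^2(i),\dots\}$ is the vertex set of the right branch starting at $i$; $B_R^-(i)$ is $B_R(i)$ minus its last vertex. A tree pattern is $(P,e)$ with $e\colon[k]\setminus\{r(P)\}\to\{0,1\}$. The preorder permutation is $\tau(\varepsilon)=$ empty, $\tau(P)=(r(P),\tau(L(P)),\tau(R(P)))$. $(P,e)$ is friendly if: (i) $p(k)\neq\varepsilon$ and $c_L(k)\neq\varepsilon$; (ii) $e(j)=0$ for all $j\in B_R^-(r(P))\setminus\{r(P)\}$; (iii) if $e(k)=1$ then $e(c_L(k))=0$. Mesh patterns: a mesh pattern is $(\tau,C)$, $\tau\in S_k$, $C\subseteq\{0,\dots,k\}^2$. With $G(\pi)=\{(j,\pi(j))\}$, $\pi\in S_n$ contains $(\tau,C)$ if there are indices $\nu_1<\dots<\nu_k$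 with $\pi(\nu_1),\dots,\pi(\nu_k)$ order-isomorphic to $\tau$ and, for $\lambda_1<\dots<\lambda_k$ these values sorted and $\nu_0=\lambda_0=0$, $\nu_{k+1}=\lambda_{k+1}=n+1$, $G(\pi)\cap((\nu_a,\nu_{a+1})\times(\lambda_b,\lambda_{b+1}))=\emptyset$ for all $(a,b)\in C$. $S_n(\sigma)$ denotes the permutations of $[n]$ avoiding $\sigma$. $\sigma(P,e)$: with $\rho=\tau(P)^{-1}$, $C_j=\{(\rho(j)-1,m):m\in B_R^-(j)\}$ for $j\in[k]$, and for non-root $j$, $C_j'=\emptyset$ if $e(j)=0$, $C_j'=\{(\rho(j)-1,\min P(j)-1),(\rho(j)-1,\max P(j))\}$ if $e(j)=1$; $\sigma(P,e)=(\tau(P),\bigcup_j C_j\cup\bigcup_j C_j')$. Tameness: for $\pi\in S_{n-1}$ and $1\le j\le n$, $c_j(\pi)\in S_n$ inserts the value $n$ at position $j$; for $\pi\in S_n$, $p(\pi)\in S_{n-1}$ removes the value $n$. $L_n\subseteq S_n$ is a zigzag language if either $n=0$ and $L_0=\{\varepsilon\}$, or $n\ge1$, $L_{n-1}:=\{p(\pi):\pi\in L_n\}$ is a zigzag language, and $c_1(\pi),c_n(\pi)\in L_n$ for all $\pi\in L_{n-1}$. A sequence $L_0,L_1,\dots$ is hereditary if $L_{n-1}=p(L_n)$ for all $n\ge1$. A pattern $\sigma$ is tame if $S_n(\sigma)$, $n\ge0$, is a hereditary sequence of zigzag languages. *)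

From mathcomp Require Import all_boot.
Set Implicit Arguments. Unset Strict Implicit. Unset Printing Implicit Defensive.

Inductive btree := BLeaf | BNode of btree & nat & btree.

Fixpoint labels (t : btree) : seq nat :=
  if t is BNode l v r then labels l ++ v :: labels r else [::].

Fixpoint search_tree (t : btree) : bool :=
  if t is BNode l v r then
    [&& all (fun x => x < v) (labels l), all (fun x => v < x) (labels r),
        search_tree l & search_tree r]
  else true.

Definition in_T (k : nat) (t : btree) : bool :=
  search_tree t && perm_eq (labels t) (iota 1 k).

(* root label; None plays the role of epsilon *)
Definition root (t : btree) : option nat :=
  if t is BNode _ v _ then Some v else None.

(* P(j): the subtree rooted at vertex j (BLeaf if j is not a vertex) *)
Fixpoint subtree (t : btree) (j : nat) : btree :=
  if t is BNode l v r then
    if v == j then t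
    else if subtree l j is BNode _ _ _ as s then s else subtree r j
  else BLeaf.

Definition cL (t : btree) (j : nat) : option nat :=
  if subtree t j is BNode l _ _ then root l else None.
Definition cR (t : btree) (j : nat) : option nat :=
  if subtree t j is BNode _ _ r then root r else None.

Fixpoint parent (t : btree) (j : nat) : option nat :=
  if t is BNode l v r then
    if (root l == Some j) || (root r == Some j) then Some v
    else if parent l j is Some x then Some x else parent r j
  else None.

Fixpoint rspine (s : btree) : seq nat :=
  if s is BNode _ v r then v :: rspine r else [::].
Definition BR (t : btree) (j : nat) : seq nat := rspine (subtree t j).
Definition BRm (t : btree) (j : nat) : seq nat :=
  take (size (BR t j)).-1 (BR t j).

Definition minl (s : seq nat) : nat := foldr minn (head 0 s) s.
Definition maxl (s : seq nat) : nat := foldr maxn 0 s.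

Fixpoint preorder (t : btree) : seq nat :=
  if t is BNode l v r then v :: preorder l ++ preorder r else [::].

(* e : [k] \ {r(P)} -> {0,1}, encoded as nat -> bool (true = 1);
   only its values on non-root vertices are ever used. *)
Definition friendly (k : nat) (t : btree) (e : nat -> bool) : Prop :=
  [/\ parent t k <> None /\ cL t k <> None,
      (forall j, j \in BRm t (odflt 0 (root t)) -> Some j <> root t -> e j = false)
    & (e k = true -> forall c, cL t k = Some c -> e c = false)].

(* (tau, C): tau in one-line notation (values 1..k), C a list of boxes *)
Definition mesh := (seq nat * seq (nat * nat))%type.

(* sigma(P,e).  rho(j) - 1 = index j tau (0-based position of j in tau). *)
Definition sigmaP (k : nat) (t : btree) (e : nat -> bool) : mesh :=
  let tau := preorder t in
  let pos j := index j tau in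
  let Cj j := [seq (pos j, m) | m <- BRm t j] in
  let Cj' j := if (Some j != root t) && e j then
                 [:: (pos j, minl (labels (subtree t j)) - 1);
                     (pos j, maxl (labels (subtree t j)))]
               else [::] in
  (tau, flatten [seq Cj j ++ Cj' j | j <- iota 1 k]).

Definition sigma_minus (k : nat) (t : btree) (e : nat -> bool) : mesh :=
  let (tau, C) := sigmaP k t e in
  (tau, [seq x <- C | x != (index k tau, k)]).

Definition is_perm (n : nat) (s : seq nat) : bool := perm_eq s (iota 1 n).

Definition contains (pi : seq nat) (sg : mesh) : Prop :=
  let (tau, C) := sg in
  let n := size pi in
  let k := size tau in
  let val j := nth 0 pi j.-1 in
  exists nu : seq nat,
    [/\ size nu = k, sorted ltn nu, all (fun x => 0 < x <= n) nu,
        (forall a b, a < k -> b < k ->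
           (val (nth 0 nu a) < val (nth 0 nu b)) = (nth 0 tau a < nth 0 tau b))
      & let nub := 0 :: rcons nu n.+1 in
        let lam := 0 :: rcons (sort leq [seq val x | x <- nu]) n.+1 in
        forall ab, ab \in C -> forall j, 0 < j <= n ->
          ~ (nth 0 nub ab.1 < j < nth 0 nub ab.1.+1 /\
             nth 0 lam ab.2 < val j < nth 0 lam ab.2.+1)].

Definition Av (sg : mesh) (n : nat) (pi : seq nat) : Prop :=
  is_perm n pi /\ ~ contains pi sg.

(* c_j(pi): insert value n at position j (1-based); p(pi): remove value n *)
Definition cins (n j : nat) (pi : seq nat) : seq nat :=
  take j.-1 pi ++ n :: drop j.-1 pi.
Definition pdel (n : nat) (pi : seq nat) : seq nat := [seq x <- pi | x != n].

Definition pimg (n : nat) (L : seq nat -> Prop) : seq nat -> Prop :=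
  fun s => exists pi, L pi /\ s = pdel n pi.

Fixpoint zigzag (n : nat) (L : seq nat -> Prop) : Prop :=
  match n with
  | 0 => forall s, L s <-> s = [::]
  | m.+1 => (forall s, L s -> is_perm m.+1 s) /\
            zigzag m (pimg m.+1 L) /\
            (forall pi, pimg m.+1 L pi -> L (cins m.+1 1 pi) /\ L (cins m.+1 m.+1 pi))
  end.

Definition hereditary (L : nat -> seq nat -> Prop) : Prop :=
  forall n, forall s, L n s <-> pimg n.+1 (L n.+1) s.

Definition tame (sg : mesh) : Prop :=
  (forall n, zigzag n (Av sg n)) /\ hereditary (Av sg).

From Pilot Require Import Defs.
From mathcomp Require Import all_boot zify.
Set Implicit Arguments. Unset Strict Implicit. Unset Printing Implicit Defensive.

(* A mesh pattern (tau, C) with tau in S_k is tame as soon as k is neither the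
   first nor the last letter of tau and no shaded box of C lies in the top row.
   An occurrence in pi in S_n survives the insertion of the value n+1 anywhere,
   because the new point lies in the top row.  An occurrence in the larger
   permutation survives the deletion of n+1 unless it uses that point, and then
   it maps it to the letter k of tau.  Hence p(S_{n+1}(sigma)) = S_n(sigma), and
   c_1 and c_n preserve avoidance: an occurrence using the new first (last)
   point would make k the first (last) letter of tau.
   For sigma^-(P,e) these conditions hold: k has a parent, so it is not the
   root, which comes first in tau(P); k has a left child, so the preorder does
   not end at k; the boxes of C_j lie below the end of the branch B_R(j) and
   min P(j) - 1 < k; finally max P(j) = k with j <> k puts j on the right
   branch of the root, where friendliness forces e(j) = 0, and the box
   (i-1, k) coming from j = k is exactly the one removed. *)

Definition entry (pi : seq nat) (j : nat) : nat := nth 0 pi j.-1.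

Definition strips (s : seq nat) (top : nat) : seq nat := 0 :: rcons s top.

Definition in_strip (s : seq nat) (top a x : nat) : bool :=
  nth 0 (strips s top) a < x < nth 0 (strips s top) a.+1.

(* The point (j, pi(j)) lies in the box ab of the grid drawn by the occurrence
   nu, i.e. in (nu_a, nu_{a+1}) x (lambda_b, lambda_{b+1}) with ab = (a, b). *)
Definition in_cell (pi nu : seq nat) (ab : nat * nat) (j : nat) : Prop :=
  in_strip nu (size pi).+1 ab.1 j /\
  in_strip (sort leq (map (entry pi) nu)) (size pi).+1 ab.2 (entry pi j).

Definition embedding (pi tau nu : seq nat) : Prop :=
  [/\ size nu = size tau, sorted ltn nu, all (fun x => 0 < x <= size pi) nu
    & forall a b, a < size tau -> b < size tau ->
        (entry pi (nth 0 nu a) < entry pi (nth 0 nu b)) = (nth 0 tau a < nth 0 tau b)].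

Definition empty_cells (pi : seq nat) (C : seq (nat * nat)) (nu : seq nat) : Prop :=
  forall ab, ab \in C -> forall j, 0 < j <= size pi -> ~ in_cell pi nu ab j.

Lemma containsE pi tau C :
  contains pi (tau, C) <-> exists nu, embedding pi tau nu /\ empty_cells pi C nu.
Proof. by split=> -[nu]; [case=> ? ? ? ? ?|case=> -[] ? ? ? ? ?]; exists nu. Qed.

Lemma ltn_bump2 h i j : (bump h i < bump h j) = (i < j).
Proof. rewrite /bump; lia. Qed.

Lemma nth_map0 (f : nat -> nat) s i : f 0 = 0 -> nth 0 (map f s) i = f (nth 0 s i).
Proof.
move=> f0; case: (ltnP i (size s)) => hi; first by rewrite (nth_map 0).
by rewrite !nth_default ?size_map.
Qed.

Lemma in_strip_bump h s top a x : 0 < h ->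
  in_strip (map (bump h) s) (bump h top) a (bump h x) = in_strip s top a x.
Proof.
move=> h0; have bump0 : bump h 0 = 0 by rewrite /bump; lia.
rewrite /in_strip; have -> : strips (map (bump h) s) (bump h top) = map (bump h) (strips s top).
  by rewrite /= map_rcons bump0.
by rewrite !nth_map0 // !ltn_bump2.
Qed.

Lemma in_strip_raise_top s n a x : all (fun y => y <= n) s -> x <= n ->
  in_strip s n.+2 a x = in_strip s n.+1 a x.
Proof.
move=> sn xn; have fix_le y : y <= n -> bump n.+1 y = y by rewrite /bump; lia.
rewrite -(in_strip_bump s n.+1 a x (ltn0Sn n)) (fix_le x xn).
have bump_top : bump n.+1 n.+1 = n.+2 by rewrite /bump leqnn.
by rewrite bump_top map_id_in // => y /(allP sn) /fix_le.
Qed.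

Lemma in_strip_above s n a : all (fun y => y <= n) s -> in_strip s n.+2 a n.+1 -> a = size s.
Proof.
move=> sn; rewrite /in_strip /= nth_rcons => /andP [_].
case: (ltngtP a (size s)) => // lt_a.
by move: (allP sn _ (mem_nth 0 lt_a)) => /=; lia.
Qed.

Lemma is_perm_bounded n s : is_perm n s -> size s = n /\ all (fun x => 0 < x <= n) s.
Proof.
move=> ps; split; first by rewrite (perm_size ps) size_iota.
by apply/allP => x; rewrite (perm_mem ps) mem_iota; lia.
Qed.

Lemma is_perm_insert n A B : is_perm n.+1 (A ++ n.+1 :: B) = is_perm n (A ++ B).
Proof.
rewrite /is_perm -[A ++ _]/(A ++ [:: n.+1] ++ B).
have -> : iota 1 n.+1 = iota 1 n ++ [:: n.+1] by rewrite -(addn1 n) iotaD add1n addn1.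
by rewrite perm_catCA perm_sym perm_catC /= perm_cons perm_sym.
Qed.

Lemma is_perm_split n pi : is_perm n.+1 pi -> exists A B, pi = A ++ n.+1 :: B.
Proof.
move=> ppi; have : n.+1 \in pi by rewrite (perm_mem ppi) mem_iota; lia.
by case/splitPr=> A B; exists A, B.
Qed.

Lemma pdel_insert n A B : is_perm n (A ++ B) -> pdel n.+1 (A ++ n.+1 :: B) = A ++ B.
Proof.
move=> /is_perm_bounded [_ bnd]; rewrite /pdel filter_cat /= eqxx -filter_cat.
by apply/all_filterP/allP => x /(allP bnd) ?; apply/eqP; lia.
Qed.

Section InsertMax.
Variables (n : nat) (A B : seq nat).
Hypothesis AB_perm : is_perm n (A ++ B).

Local Notation pi := (A ++ B).
Local Notation pi' := (A ++ n.+1 :: B).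
Local Notation sh := (bump (size A).+1).

Let size_pi : size pi = n. Proof. by case: (is_perm_bounded AB_perm). Qed.
Let size_pi' : size pi' = n.+1. Proof. by rewrite size_cat /= addnS -size_cat size_pi. Qed.
Let size_A : size A <= n. Proof. by rewrite -size_pi size_cat leq_addr. Qed.

Lemma entry_le j : entry pi j <= n.
Proof.
rewrite /entry; case: (ltnP j.-1 (size pi)) => [/(mem_nth 0) | /(nth_default 0) -> //].
by case: (is_perm_bounded AB_perm) => _ /allP bnd /bnd /andP [].
Qed.

Lemma entry_insert_max : entry pi' (size A).+1 = n.+1.
Proof. by rewrite /entry nth_cat ltnn subnn. Qed.

Lemma entry_insert_bump j : 0 < j -> entry pi' (sh j) = entry pi j.
Proof.
case: j => // j _; rewrite /entry bumpS /= /bump !nth_cat.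
case: (leqP (size A) j) => hj /=; last by rewrite hj.
by rewrite add1n ltnNge (leqW hj) /= subSn.
Qed.

Lemma map_entry_insert nu :
  all (fun x => 0 < x) nu -> map (entry pi') (map sh nu) = map (entry pi) nu.
Proof. by move=> /allP nu0; rewrite -map_comp; apply/eq_in_map => x /nu0 /entry_insert_bump. Qed.

Lemma sort_entries_le nu : all (fun y => y <= n) (sort leq (map (entry pi) nu)).
Proof. by apply/allP => y; rewrite mem_sort => /mapP [x _ ->]; apply: entry_le. Qed.

Lemma in_cell_insert nu ab j : all (fun x => 0 < x) nu -> 0 < j ->
  in_cell pi' (map sh nu) ab (sh j) <-> in_cell pi nu ab j.
Proof.
move=> nu0 j0; rewrite /in_cell map_entry_insert // entry_insert_bump // size_pi' size_pi.
have sh_top : sh n.+1 = n.+2 by rewrite /bump ltnS size_A.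
rewrite [in_strip (sort _ _) _ _ _]in_strip_raise_top ?entry_le ?sort_entries_le //.
by rewrite -sh_top in_strip_bump.
Qed.

Lemma embedding_insert tau nu : embedding pi' tau (map sh nu) <-> embedding pi tau nu.
Proof.
have range : all (fun x => 0 < x <= size pi') (map sh nu) = all (fun x => 0 < x <= size pi) nu.
  by rewrite all_map size_pi' size_pi; apply: eq_all => x /=; rewrite /bump; lia.
have sorted_sh : sorted ltn (map sh nu) = sorted ltn nu.
  by rewrite sorted_map; apply: eq_sorted => x y; apply: ltn_bump2.
have entry_nth a : all (fun x => 0 < x <= size pi) nu -> a < size nu ->
    entry pi' (nth 0 (map sh nu) a) = entry pi (nth 0 nu a).
  move=> /allP bnd lt_a; rewrite (nth_map 0) // entry_insert_bump //.
  by have /andP [] := bnd _ (mem_nth 0 lt_a).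
rewrite /embedding size_map range sorted_sh.
by split=> -[sz srt bnd iso]; split=> // a b lt_a lt_b; rewrite -iso // !entry_nth ?sz.
Qed.

Lemma empty_cells_delete C nu :
  all (fun x => 0 < x) nu -> empty_cells pi' C (map sh nu) -> empty_cells pi C nu.
Proof.
move=> nu0 empty ab C_ab j j_range; rewrite -in_cell_insert //; last by case/andP: j_range.
by apply: (empty ab C_ab); rewrite size_pi' -size_pi /bump; lia.
Qed.

Lemma empty_cells_insert (tau : seq nat) C nu :
  (forall ab, ab \in C -> ab.2 != size tau) -> size nu = size tau ->
  all (fun x => 0 < x) nu -> empty_cells pi C nu -> empty_cells pi' C (map sh nu).
Proof.
move=> C_low sz nu0 empty ab C_ab j; rewrite size_pi' => j_range.
case: (eqVneq j (size A).+1) => [-> | j_new].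
  rewrite /in_cell entry_insert_max size_pi' map_entry_insert // => -[_ top_row].
  have := in_strip_above (sort_entries_le nu) top_row.
  by rewrite size_sort size_map sz; apply/eqP/C_low.
have -> : j = sh (unbump (size A).+1 j) by rewrite unbumpKcond (negPf j_new).
rewrite in_cell_insert //; last by rewrite /unbump; lia.
by apply: (empty ab C_ab); rewrite size_pi /unbump; lia.
Qed.

Lemma entry_insert_le j : 0 < j -> j != (size A).+1 -> entry pi' j <= n.
Proof.
move=> j0 j_new; have -> : j = sh (unbump (size A).+1 j) by rewrite unbumpKcond (negPf j_new).
by rewrite entry_insert_bump ?entry_le // /unbump; lia.
Qed.

Lemma embedding_max_pos tau nu a : is_perm (size tau) tau -> embedding pi' tau nu ->
  a < size tau -> nth 0 nu a = (size A).+1 -> nth 0 tau a = size tau.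
Proof.
move=> tau_perm [sz srt /allP bnd iso] lt_a nu_a.
have [_ /allP tau_bnd] := is_perm_bounded tau_perm.
have tau_max : size tau \in tau by rewrite (perm_mem tau_perm) mem_iota; lia.
have lt_b : index (size tau) tau < size tau by rewrite index_mem.
case: (eqVneq (index (size tau) tau) a) => [<- | ne_ba]; first by rewrite nth_index.
have nu_b_ne : nth 0 nu (index (size tau) tau) != (size A).+1.
  by rewrite -nu_a nth_uniq ?sz // (sorted_uniq ltn_trans ltnn).
have nu_b_pos : 0 < nth 0 nu (index (size tau) tau).
  have lt_b' : index (size tau) tau < size nu by rewrite sz.
  by have /andP [] := bnd _ (mem_nth 0 lt_b').
have : nth 0 tau (index (size tau) tau) < nth 0 tau a.
  by rewrite -iso // nu_a entry_insert_max ltnS entry_insert_le.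
by rewrite nth_index // ltnNge; have /andP [_ ->] := tau_bnd _ (mem_nth 0 lt_a).
Qed.

Lemma contains_delete_unused tau C nu : embedding pi' tau nu -> empty_cells pi' C nu ->
  (size A).+1 \notin nu -> contains pi (tau, C).
Proof.
move=> emb empty unused; apply/containsE.
have /allP nu_pos : all (fun x => 0 < x) nu.
  by case: emb => _ _ /allP bnd _; apply/allP => x /bnd /andP [].
have nu_ne x : x \in nu -> x != (size A).+1 by move=> x_nu; apply: contraNneq unused => <-.
set mu := map (unbump (size A).+1) nu.
have nu_mu : nu = map sh mu.
  by rewrite -map_comp map_id_in // => x /nu_ne x_ne /=; rewrite unbumpKcond (negPf x_ne).
have mu_pos : all (fun x => 0 < x) mu.
  rewrite all_map; apply/allP => x x_nu /=.
  by have := nu_pos _ x_nu; have := nu_ne _ x_nu; rewrite /unbump; lia.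
exists mu; rewrite nu_mu in emb empty.
by split; [apply/embedding_insert | apply: empty_cells_delete].
Qed.

Lemma contains_insert_max tau C : (forall ab, ab \in C -> ab.2 != size tau) ->
  contains pi (tau, C) -> contains pi' (tau, C).
Proof.
move=> C_low /containsE [nu [emb empty]]; apply/containsE; exists (map sh nu).
have [sz _ /allP bnd _] := emb.
split; first exact/embedding_insert.
by apply: (empty_cells_insert C_low sz) => //; apply/allP => x /bnd /andP [].
Qed.

End InsertMax.

Lemma zigzag_ext n (L L' : seq nat -> Prop) :
  (forall s, L s <-> L' s) -> zigzag n L -> zigzag n L'.
Proof.
elim: n L L' => [|n IHn] L L' eqL /=; first by move=> L0 s; rewrite -eqL.
have eq_pimg s : pimg n.+1 L s <-> pimg n.+1 L' s.
  by split=> -[pi [L_pi ->]]; exists pi; split=> //; apply/eqL.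
move=> [L_perm [zig_pimg L_ends]]; split; first by move=> s /eqL /L_perm.
split; first exact: IHn eq_pimg zig_pimg.
by move=> pi /eq_pimg /L_ends [] /eqL ? /eqL.
Qed.

Section TameCriterion.
Variables (tau : seq nat) (C : seq (nat * nat)).
Hypothesis tau_perm : is_perm (size tau) tau.
Hypothesis tau_nonempty : 0 < size tau.
Hypothesis head_not_max : head 0 tau != size tau.
Hypothesis last_not_max : last 0 tau != size tau.
Hypothesis C_low : forall ab, ab \in C -> ab.2 != size tau.

Local Notation Av_tau := (Av (tau, C)).

Lemma contains_cons_max n pi :
  is_perm n pi -> contains (n.+1 :: pi) (tau, C) -> contains pi (tau, C).
Proof.
move=> pi_perm /containsE [nu [emb empty]].
have [nu1 | unused] := boolP (1 \in nu); last first.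
  exact: (contains_delete_unused (A := [::]) pi_perm emb empty unused).
have [sz srt /allP bnd _] := emb.
have lt_i : index 1 nu < size tau by rewrite -sz index_mem.
have tau_i := embedding_max_pos (A := [::]) pi_perm tau_perm emb lt_i (nth_index 0 nu1).
have i0 : index 1 nu = 0.
  apply/eqP; rewrite eqn0Ngt; apply/negP => i_pos.
  have nu_nonempty : 0 < size nu by rewrite sz.
  have := sorted_ltn_nth ltn_trans 0 srt 0 (index 1 nu).
  rewrite !inE nu_nonempty index_mem nth_index // => /(_ isT nu1 i_pos).
  by rewrite ltnNge; have /andP [-> _] := bnd _ (mem_nth 0 nu_nonempty).
by move: head_not_max; rewrite -nth0 -{2}i0 tau_i eqxx.
Qed.

Lemma contains_rcons_max n pi :
  is_perm n pi -> contains (rcons pi n.+1) (tau, C) -> contains pi (tau, C).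
Proof.
move=> pi_perm; rewrite -cats1 => /containsE [nu [emb empty]].
have pi_perm' : is_perm n (pi ++ [::]) by rewrite cats0.
have [sz_pi _] := is_perm_bounded pi_perm.
have [top | unused] := boolP (n.+1 \in nu); last first.
  by have := contains_delete_unused pi_perm' emb empty; rewrite cats0 sz_pi; apply.
have [sz srt /allP bnd _] := emb.
have lt_i : index n.+1 nu < size tau by rewrite -sz index_mem.
have nu_i : nth 0 nu (index n.+1 nu) = (size pi).+1 by rewrite nth_index // sz_pi.
have tau_i := embedding_max_pos pi_perm' tau_perm emb lt_i nu_i.
have i_last : index n.+1 nu = (size tau).-1.
  apply/eqP; rewrite eqn_leq -ltnS prednK // lt_i leqNgt /=; apply/negP => i_lt.
  have next_lt : (index n.+1 nu).+1 < size nu by rewrite sz -ltn_predRL.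
  have := sorted_ltn_nth ltn_trans 0 srt (index n.+1 nu) (index n.+1 nu).+1.
  rewrite !inE index_mem top next_lt nth_index // => /(_ isT isT (ltnSn _)).
  have /andP [_] := bnd _ (mem_nth 0 next_lt).
  by rewrite size_cat sz_pi addn1 ltnNge => ->.
by move: last_not_max; rewrite -nth_last -i_last tau_i eqxx.
Qed.

Lemma Av_cons_max n s : Av_tau n s -> Av_tau n.+1 (n.+1 :: s).
Proof.
move=> [s_perm s_avoid]; split; first by rewrite (is_perm_insert n [::] s).
by move/(contains_cons_max s_perm).
Qed.

Lemma Av_rcons_max n s : Av_tau n s -> Av_tau n.+1 (rcons s n.+1).
Proof.
move=> [s_perm s_avoid]; split; first by rewrite -cats1 is_perm_insert cats0.
by move/(contains_rcons_max s_perm).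
Qed.

Lemma Av_pimg n s : Av_tau n s <-> pimg n.+1 (Av_tau n.+1) s.
Proof.
split=> [s_av | [pi [[pi_perm pi_avoid] ->]]].
  exists (n.+1 :: s); split; first exact: Av_cons_max.
  by rewrite (pdel_insert (A := [::]) s_av.1).
have [A [B def_pi]] := is_perm_split pi_perm; subst pi.
rewrite is_perm_insert in pi_perm; rewrite pdel_insert //.
by split=> // contains_AB; apply/pi_avoid/contains_insert_max.
Qed.

Lemma zigzag_Av n : zigzag n (Av_tau n).
Proof.
elim: n => [|n IHn] /=.
  move=> s; split=> [[s_perm _] | ->]; first by apply: size0nil; case: (is_perm_bounded s_perm).
  split=> // /containsE [[|x nu] [[sz _ bnd _] _]]; first by move: tau_nonempty; rewrite -sz.
  by move: bnd => /= /andP [/andP [x_pos x_le0] _]; move: x_pos; rewrite ltnNge x_le0.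
split; first by move=> s [].
split; first by apply: zigzag_ext IHn => s; apply: Av_pimg.
move=> pi /Av_pimg pi_av; split; first by rewrite /cins take0 drop0; apply: Av_cons_max.
have [sz _] := is_perm_bounded pi_av.1.
rewrite /cins /= -[n in take n]sz -[n in drop n]sz take_size drop_size cats1.
exact: Av_rcons_max.
Qed.

Theorem tame_mesh : tame (tau, C).
Proof. by split; [apply: zigzag_Av | move=> n s; apply: Av_pimg]. Qed.

End TameCriterion.

Lemma perm_preorder t : perm_eq (preorder t) (labels t).
Proof.
elim: t => [|l IHl v r IHr] //=.
rewrite -[labels l ++ _]/(labels l ++ [:: v] ++ labels r) perm_sym perm_catCA /= perm_cons.
by rewrite perm_sym perm_cat.
Qed.

Lemma subtree_labels t j : {subset labels (subtree t j) <= labels t}.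
Proof.
elim: t => [|l IHl v r IHr] //= x; case: eqP => // _.
case E: (subtree l j) => [|a b c]; first by move=> /IHr x_r; rewrite mem_cat inE x_r !orbT.
by rewrite -E => /IHl x_l; rewrite mem_cat x_l.
Qed.

Lemma subtree_root_label t j l v r : subtree t j = BNode l v r -> v = j.
Proof.
elim: t => [|l' IHl v' r' IHr] //=; case: eqP => [-> [] // | _].
by case E: (subtree l' j) => [|a b c]; [apply: IHr | rewrite -E; apply: IHl].
Qed.

Lemma subtree_node_mem t j l v r : subtree t j = BNode l v r -> j \in labels t.
Proof.
move=> t_j; apply: (subtree_labels (j := j)).
by rewrite t_j /= (subtree_root_label t_j) mem_cat inE eqxx orbT.
Qed.

Lemma search_tree_subtree t j : search_tree t -> search_tree (subtree t j).
Proof.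
elim: t => [|l IHl v r IHr] //= /and4P [lt_l gt_r srch_l srch_r].
case: eqP => _; first by rewrite /= lt_l gt_r srch_l srch_r.
by case E: (subtree l j) => [|a b c]; [apply: IHr | rewrite -E; apply: IHl].
Qed.

Lemma rspine_labels t : {subset rspine t <= labels t}.
Proof.
elim: t => [|l _ v r IHr] //= x; rewrite inE mem_cat inE.
by case/orP => [-> | /IHr ->]; rewrite ?orbT.
Qed.

Lemma path_rspine t x :
  search_tree t -> all (fun y => x < y) (labels t) -> path ltn x (rspine t).
Proof.
elim: t x => [|l _ v r IHr] x //= /and4P [_ gt_r _ srch_r].
by rewrite all_cat /= => /and3P [_ -> _]; apply: IHr.
Qed.

Lemma sorted_rspine t : search_tree t -> sorted ltn (rspine t).
Proof. by case: t => [|l v r] //= /and4P [_ gt_r _ srch_r]; apply: path_rspine. Qed.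

Lemma root_mem t x : Defs.root t = Some x -> x \in labels t.
Proof. by case: t => //= l v r [<-]; rewrite mem_cat inE eqxx orbT. Qed.

Lemma parent_mem t j x : parent t j = Some x -> j \in labels t.
Proof.
elim: t x => [|l IHl v r IHr] x //=; rewrite mem_cat inE.
case: ifP => [/orP [] /eqP /root_mem -> _ | _]; rewrite ?orbT //.
case E: (parent l j) => [y|] => [_ | /IHr ->]; last by rewrite !orbT.
by rewrite (IHl y E).
Qed.

Lemma parent_in_children l v r j x :
  parent (BNode l v r) j = Some x -> (j \in labels l) || (j \in labels r).
Proof.
rewrite /=; case: ifP => [/orP [] /eqP /root_mem -> _ | _]; rewrite ?orbT //.
case E: (parent l j) => [y|] => [_ | /parent_mem ->]; last by rewrite orbT.
by rewrite (parent_mem E).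
Qed.

Lemma parent_not_root t j : search_tree t -> parent t j <> None -> Defs.root t != Some j.
Proof.
case: t => [|l v r] //= /and4P [/allP lt_l /allP gt_r _ _] has_parent.
apply/eqP => -[def_v]; case E: (parent (BNode l v r) j) => [x|] //.
by case/orP: (parent_in_children E) => [/lt_l | /gt_r]; rewrite def_v ltnn.
Qed.

Lemma sorted_take_lt_last s x d : sorted ltn s -> x \in take (size s).-1 s -> x < last d s.
Proof.
case: s => [|a s] // srt /(nthP 0) [i]; rewrite size_takel //= => lt_i <-.
rewrite nth_take //= (last_nth 0).
by apply: (sorted_ltn_nth ltn_trans) => //; rewrite inE /= ltnS ?(ltnW lt_i).
Qed.

Lemma mem_take_last (s : seq nat) x d : x \in s -> x != last d s -> x \in take (size s).-1 s.
Proof.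
case/lastP: s => [|s y] //; rewrite mem_rcons inE last_rcons size_rcons /= -cats1.
by case/orP => [/eqP -> | x_s]; [rewrite eqxx | rewrite take_size_cat].
Qed.

Lemma BRm_lt t j k m :
  search_tree t -> all (fun x => x <= k) (labels t) -> m \in BRm t j -> m < k.
Proof.
move=> srch /allP le_k m_BRm; rewrite /BRm in m_BRm.
have := sorted_take_lt_last m (sorted_rspine (search_tree_subtree j srch)) m_BRm.
have last_BR : last m (BR t j) \in m :: BR t j by apply: mem_last.
case/predU1P: last_BR => [-> | /rspine_labels /subtree_labels /le_k le_last]; first by rewrite ltnn.
by move/leq_trans; apply.
Qed.

Section MaxLabel.
Variables (t : btree) (k : nat).
Hypothesis srch : search_tree t.
Hypothesis le_k : all (fun x => x <= k) (labels t).

Lemma last_rspine_max d : k \in labels t -> last d (rspine t) = k.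
Proof.
elim: t srch le_k d => [|l _ v r IHr] //= /and4P [/allP lt_l /allP gt_r _ srch_r].
rewrite all_cat /= => /and3P [_ le_v le_r] d; rewrite mem_cat inE.
case/or3P => [/lt_l | /eqP def_k | k_r]; last exact: IHr.
  by rewrite ltnNge le_v.
case: r gt_r le_r {IHr srch_r} => [|rl rv rr] //= gt_r /allP le_r.
have rv_r : rv \in labels rl ++ rv :: labels rr by rewrite mem_cat inE eqxx orbT.
by have := gt_r _ rv_r; rewrite ltnNge -def_k le_r.
Qed.

Lemma subtree_max_rspine j : k \in labels (subtree t j) -> j \in rspine t.
Proof.
elim: t srch le_k => [|l IHl v r IHr] //= /and4P [/allP lt_l _ _ srch_r].
rewrite all_cat /= => /and3P [_ le_v le_r]; case: eqP => [-> | _]; first by rewrite inE eqxx.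
case E: (subtree l j) => [|a b c]; first by move=> /(IHr srch_r le_r); rewrite inE orbC => ->.
by rewrite -E => /subtree_labels /lt_l; rewrite ltnNge le_v.
Qed.

Lemma subtree_max_BRm_root j :
  k \in labels (subtree t j) -> j != k -> j \in BRm t (odflt 0 (Defs.root t)).
Proof.
move=> k_j j_ne; have k_t := subtree_labels k_j.
have -> : BRm t (odflt 0 (Defs.root t)) = take (size (rspine t)).-1 (rspine t).
  by case: (t) => //= l v r; rewrite /BRm /BR /= eqxx.
by apply: (mem_take_last (d := 0)); [apply: subtree_max_rspine | rewrite last_rspine_max].
Qed.

Lemma last_preorder_neq_max : cL t k <> None -> last 0 (preorder t) != k.
Proof.
elim: t srch le_k => [|l _ v r IHr] //= /and4P [/allP lt_l /allP gt_r _ srch_r].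
rewrite all_cat /= => /and3P [_ le_v /allP le_r]; rewrite /cL /=.
case: eqP => [def_v | _].
  case: r gt_r le_r {IHr srch_r} => [_ _ | rl rv rr gt_r le_r]; last first.
    have rv_r : rv \in labels rl ++ rv :: labels rr by rewrite mem_cat inE eqxx orbT.
    by have := gt_r _ rv_r; rewrite ltnNge def_v le_r.
  case: l lt_l => [|ll lv lr] // lt_l _; rewrite cats0 /=.
  have : last lv (preorder ll ++ preorder lr) \in labels (BNode ll lv lr).
    by rewrite -(perm_mem (perm_preorder _)) mem_last.
  by move/lt_l; rewrite def_v; apply: contraTneq => ->; rewrite ltnn.
case E: (subtree l k) => [|a b c].
  case: r gt_r IHr srch_r le_r => [|rl rv rr] // _ IHr srch_r /allP le_r cL_r.
  by rewrite last_cat; apply: IHr.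
by move: (subtree_node_mem E) => /lt_l; rewrite ltnNge le_v.
Qed.

End MaxLabel.

Lemma minl_le s k : all (fun x => x <= k) s -> minl s <= k.
Proof. by case: s => [|x s] //= /andP [le_x _]; rewrite /minl /= geq_min le_x. Qed.

Lemma maxl_mem s m : 0 < m -> maxl s = m -> m \in s.
Proof.
elim: s => [|a s IHs] /= m_pos; first by move=> m0; rewrite -m0 in m_pos.
by rewrite /maxn inE; case: ifP => _ def_m; [rewrite IHs ?orbT | rewrite def_m eqxx].
Qed.

Section SigmaMinus.
Variables (k : nat) (P : btree) (e : nat -> bool).
Hypothesis P_T : in_T k P.
Hypothesis P_friendly : friendly k P e.

Let srch : search_tree P. Proof. by case/andP: P_T. Qed.
Let labels_perm : perm_eq (labels P) (iota 1 k). Proof. by case/andP: P_T. Qed.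
Let le_k : all (fun x => x <= k) (labels P).
Proof. by apply/allP => x; rewrite (perm_mem labels_perm) mem_iota; lia. Qed.

Let size_preorder : size (preorder P) = k.
Proof. by rewrite (perm_size (perm_preorder P)) (perm_size labels_perm) size_iota. Qed.

Let le_k_subtree j : all (fun x => x <= k) (labels (subtree P j)).
Proof. by apply/allP => x /subtree_labels /(allP le_k). Qed.

Let k_labels : k \in labels P.
Proof.
case: P_friendly => -[has_parent _] _ _.
by case E: (parent P k) has_parent => [x|] // _; apply: parent_mem E.
Qed.

Lemma preorder_perm : is_perm (size (preorder P)) (preorder P).
Proof. by rewrite size_preorder; apply: perm_trans (perm_preorder P) labels_perm. Qed.

Let k_pos : 0 < k.
Proof. by have := k_labels; rewrite (perm_mem labels_perm) mem_iota; lia. Qed.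

Lemma size_preorder_gt0 : 0 < size (preorder P).
Proof. by rewrite size_preorder. Qed.

Lemma head_preorder : head 0 (preorder P) != size (preorder P).
Proof.
rewrite size_preorder; case: P_friendly => -[has_parent _] _ _.
have := parent_not_root srch has_parent; case: (P) => [_ | l v r] /=.
  by rewrite eq_sym -lt0n k_pos.
by apply: contra => /eqP ->.
Qed.

Lemma last_preorder : last 0 (preorder P) != size (preorder P).
Proof.
rewrite size_preorder; case: P_friendly => -[_ has_lchild] _ _.
exact: last_preorder_neq_max.
Qed.

Lemma sigma_minus_boxes_low ab : ab \in (sigma_minus k P e).2 -> ab.2 != size (preorder P).
Proof.
rewrite size_preorder /= mem_filter => /andP [not_removed /flattenP [_ /mapP [j _ ->]]].
rewrite mem_cat => /orP [/mapP [m m_BRm ->] | ].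
  by rewrite ltn_eqF // (BRm_lt srch le_k m_BRm).
case: ifP => // /andP [j_nonroot e_j]; rewrite !inE => /orP [] /eqP def_ab; rewrite def_ab /=.
  by have := minl_le (le_k_subtree j); have := k_pos; lia.
apply/eqP => max_k; have k_j := maxl_mem k_pos max_k.
have j_ne : j != k by apply: contraNneq not_removed => def_j; rewrite def_ab max_k def_j.
case: P_friendly => _ /(_ j (subtree_max_BRm_root srch le_k k_j j_ne)) nonroot_e _.
by rewrite (nonroot_e (elimN eqP j_nonroot)) in e_j.
Qed.

End SigmaMinus.

Theorem lemma8 (k : nat) (P : btree) (e : nat -> bool) :
  in_T k P -> friendly k P e -> tame (sigma_minus k P e).
Proof.
move=> P_T P_friendly; have -> : sigma_minus k P e = (preorder P, (sigma_minus k P e).2) by [].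
apply: (tame_mesh (preorder_perm P_T)).
- exact: size_preorder_gt0 P_T P_friendly.
- exact: head_preorder P_T P_friendly.
- exact: last_preorder P_T P_friendly.
- exact: sigma_minus_boxes_low P_T P_friendly.
Qed.
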